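(* Let $K_n$ be the complete directed graph on $[n]$ with edges $(i,j)$ for all $i<j$. A subgraph $H\subseteq K_n$ gives a face $\tilde Q_H$ of $\tilde Q_{K_n}$ if and only if there are integers $0=n_0<n_1<\dots<n_\ell<n_{\ell+1}=n$ ($\ell\ge0$) such that $H=K_{[n_0+1,n_1]}\sqcup K_{[n_1+1,n_2]}\sqcup\dots\sqcup K_{[n_\ell+1,n]}$, i.e. $E(H)=\{(i,j):i<j,\ i,j\in[n_k+1,n_{k+1}]\text{ for some }k\}$.
   Context: $[a,b]=\{a,a+1,\dots,b\}$, and $K_P$ denotes the complete graph on $P$ with edges oriented from smaller to larger vertex. Subgraphs $H\subseteq K_n$ have vertex set $[n]$. $\tilde Q_H=\mathrm{conv}(\{\mathbf 0\}\cup\{\mathbf e_i-\mathbf e_j:(i,j)\in E(H)\})\subset\mathbb R^n$. *)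

(* Vertices [n] = {1..n} are encoded 0-based as 'I_n. *)
From HB Require Import structures.
From mathcomp Require Import all_boot all_order all_algebra.
Set Implicit Arguments. Unset Strict Implicit. Unset Printing Implicit Defensive.
Import Order.TTheory GRing.Theory Num.Theory.
Local Open Scope ring_scope.

Definition evec (R : realFieldType) (n : nat) (i : 'I_n) : 'rV[R]_n := delta_mx 0 i.

Definition dotv (R : realFieldType) (n : nat) (c x : 'rV[R]_n) : R :=
  \sum_(i < n) c 0 i * x 0 i.

Definition in_conv (R : realFieldType) (n : nat) (P : 'rV[R]_n -> Prop)
  (x : 'rV[R]_n) : Prop :=
  exists (k : nat) (v : 'I_k -> 'rV[R]_n) (w : 'I_k -> R),
    [/\ forall i, P (v i), forall i, 0 <= w i,
        \sum_(i < k) w i = 1 & x = \sum_(i < k) w i *: v i].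

Definition Qtilde (R : realFieldType) (n : nat) (H : {set 'I_n * 'I_n})
  : 'rV[R]_n -> Prop :=
  in_conv (fun y => y = 0 \/
     exists i j : 'I_n, (i, j) \in H /\ y = evec R i - evec R j).

Definition Kn (n : nat) : {set 'I_n * 'I_n} := [set e : 'I_n * 'I_n | (e.1 < e.2)%N].

Definition is_face (R : realFieldType) (n : nat) (P F : 'rV[R]_n -> Prop) : Prop :=
  exists (c : 'rV[R]_n) (b : R),
    (forall x, P x -> dotv c x <= b) /\
    (forall x, F x <-> (P x /\ dotv c x = b)).

From HB Require Import structures.
From mathcomp Require Import all_boot all_order all_algebra.
From mathcomp Require Import zify lra.
Import Order.TTheory GRing.Theory Num.Theory.

(* Since 0 lies in every Q~_H, a face of Q~_{K_n} is cut out by a functional c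
   with c.(e_i - e_j) <= 0 for all i < j, i.e. c is nondecreasing along [n], and
   the face is the hull of 0 and the edges with c_i = c_j (no other edge vector
   e_i - e_j lies in it).  So the graphs giving faces are exactly the "level
   graphs" of nondecreasing functions on [n], and the level sets of such a
   function are consecutive intervals; conversely the number of interval
   boundaries <= i is a nondecreasing function whose level sets are the blocks. *)

Definition splits (s : seq nat) (i j : nat) : bool := has (fun m => i < m <= j) s.

Definition in_block (s : seq nat) (i j : nat) : Prop :=
  exists k, [/\ k.+1 < size s, nth 0 s k <= i & j < nth 0 s k.+1].

Definition ncuts (s : seq nat) (i : nat) : nat := count (fun m => m <= i) s.

Lemma splitsS s i j : splits s i j -> splits s i j.+1.
Proof. by apply: sub_has => m /andP [-> /leqW]. Qed.

Lemma in_blockP {s n i} j : sorted ltn s -> head 0 s = 0 -> last 0 s = n -> i < n ->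
  in_block s i j <-> ~~ splits s i j.
Proof.
move=> s_sorted s_head s_last lt_in.
have s_leq : sorted leq s by apply: sub_sorted s_sorted => ? ? /ltnW.
have nth_mono := sorted_leq_nth leq_trans leqnn 0 s_leq.
split=> [[k [lt_ks le_ki lt_jk]]|].
  apply/hasPn => _ /(nthP 0) [t lt_ts <-]; apply/negP => /andP [lt_it le_tj].
  case: (leqP t k) => le_tk.
    by have := leq_trans (nth_mono _ _ lt_ts (ltnW lt_ks) le_tk) le_ki; rewrite leqNgt lt_it.
  by have := leq_trans (nth_mono _ _ lt_ks lt_ts le_tk) le_tj; rewrite leqNgt lt_jk.
move/hasPn => no_cut.
have has_gt : has (fun m => i < m) s.
  apply/hasP; exists n => //; move: (mem_last 0 s); rewrite s_last inE.
  by case/predU1P => // n0; lia.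
set f := find (fun m => i < m) s.
have lt_fs : f < size s by rewrite -has_find.
have gt_if := nth_find 0 has_gt; rewrite -/f in gt_if.
have f_gt0 : 0 < f.
  by rewrite lt0n; apply/eqP => f0; move: gt_if; rewrite f0 nth0 s_head ltn0.
exists f.-1; rewrite prednK //; split => //.
  by rewrite leqNgt (before_find 0) // -subn1 ltn_subrL.
by have := no_cut _ (mem_nth 0 lt_fs); rewrite gt_if /= -ltnNge.
Qed.

Section CutSequence.
Context {d : Order.disp_t} {T : porderType d} {n : nat} {f : nat -> T}.
Hypothesis n_gt0 : 0 < n.
Hypothesis f_mono : forall a b, a <= b -> b < n -> (f a <= f b)%O.

Let is_cut m := [|| m == 0, m == n | f m.-1 != f m].
Let cuts := filter is_cut (iota 0 n.+1).

Lemma mem_cuts m : (m \in cuts) = (m <= n) && is_cut m.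
Proof. by rewrite mem_filter mem_iota andbC. Qed.

Lemma eq_level_splits i j : i <= j -> j < n -> (f i = f j) <-> ~~ splits cuts i j.
Proof.
move=> le_ij lt_jn; split=> [eq_fij|].
  apply/hasPn => m; rewrite mem_cuts /is_cut => /andP [_ cut_m].
  apply/negP => /andP [lt_im le_mj]; move: cut_m.
  have [-> -> /=] : (m == 0) = false /\ (m == n) = false by split; apply/negbTE; lia.
  apply/negP; rewrite negbK eq_le f_mono ?leq_pred //=; last lia.
  rewrite (le_trans (f_mono _ _ le_mj lt_jn)) // -eq_fij f_mono //; lia.
elim: j le_ij lt_jn => [|j IH]; first by rewrite leqn0 => /eqP ->.
rewrite leq_eqVlt => /predU1P [-> //| lt_ij] lt_jn no_cut.
rewrite (IH lt_ij (ltnW lt_jn)); last by apply: contra no_cut; apply: splitsS.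
have : j.+1 \notin cuts by apply: contra no_cut => cut_j; apply/hasP; exists j.+1 => //; lia.
rewrite mem_cuts /is_cut /= ltnW //=; have -> : (j.+1 == n) = false by apply/negbTE; lia.
by move/negPn/eqP.
Qed.

Lemma exists_cut_seq : exists s,
  [/\ 2 <= size s, sorted ltn s, head 0 s = 0, last 0 s = n &
      forall i j, i <= j -> j < n -> (f i = f j) <-> ~~ splits s i j].
Proof.
have iota_rcons : iota 0 n.+1 = rcons (iota 0 n) n by rewrite -addn1 iotaD cats1.
exists cuts; split.
- rewrite /cuts /= {1}/is_cut /= ltnS lt0n size_eq0 -has_filter; apply/hasP; exists n => /=.
    by rewrite mem_iota; lia.
  by rewrite eqxx orbT.
- by apply: sorted_filter; [exact: ltn_trans | exact: iota_ltn_sorted].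
- by [].
- by rewrite /cuts iota_rcons filter_rcons /is_cut eqxx orbT last_rcons.
- exact: eq_level_splits.
Qed.

End CutSequence.

Lemma ncuts_split s {i j} : i <= j ->
  ncuts s j = ncuts s i + count (fun m => i < m <= j) s.
Proof.
move=> le_ij; elim: s => [//|m s IH]; rewrite /ncuts /= -!/(ncuts _ _) IH.
case: (leqP m i) => [le_mi|lt_im] /=; last by case: (m <= j); lia.
by rewrite (leq_trans le_mi le_ij); lia.
Qed.

Lemma leq_ncuts s {i j} : i <= j -> ncuts s i <= ncuts s j.
Proof. by move=> le_ij; rewrite (ncuts_split s le_ij) leq_addr. Qed.

Lemma eq_ncuts s {i j} : i <= j -> (ncuts s i == ncuts s j) = ~~ splits s i j.
Proof.
move=> le_ij; rewrite (ncuts_split s le_ij) -{1}[ncuts s i]addn0 eqn_add2l.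
by rewrite /splits has_count -leqNgt leqn0 eq_sym.
Qed.

Local Open Scope ring_scope.

Section ConvexHull.
Context {R : realFieldType} {n : nat}.
Implicit Types (P Q : 'rV[R]_n -> Prop) (c x y : 'rV[R]_n) (b : R).

Lemma dotv_sum c k (w : 'I_k -> R) (v : 'I_k -> 'rV[R]_n) :
  dotv c (\sum_(t < k) w t *: v t) = \sum_(t < k) w t * dotv c (v t).
Proof.
rewrite /dotv; under eq_bigr => i _ do rewrite summxE mulr_sumr.
rewrite exchange_big; apply: eq_bigr => t _; rewrite mulr_sumr.
by apply: eq_bigr => i _; rewrite mxE mulrCA.
Qed.

Lemma dotv0 c : dotv c 0 = 0.
Proof. by rewrite /dotv big1 // => i _; rewrite mxE mulr0. Qed.

Lemma dotvB c x y : dotv c (x - y) = dotv c x - dotv c y.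
Proof. by rewrite /dotv -sumrB; apply: eq_bigr => i _; rewrite !mxE mulrBr. Qed.

Lemma dotv_evec c (a : 'I_n) : dotv c (evec R a) = c 0 a.
Proof.
rewrite /dotv (bigD1 a) //= big1 => [|i /negbTE neq_ia]; last by rewrite mxE neq_ia mulr0.
by rewrite mxE !eqxx mulr1 addr0.
Qed.

Lemma dotv_evecB c (a b : 'I_n) : dotv c (evec R a - evec R b) = c 0 a - c 0 b.
Proof. by rewrite dotvB !dotv_evec. Qed.

Lemma in_conv_pt P y : P y -> in_conv P y.
Proof.
by move=> Py; exists 1%N, (fun=> y), (fun=> 1); split; rewrite ?big_ord1 ?scale1r.
Qed.

Lemma in_conv_sub {P Q x} : (forall y, P y -> Q y) -> in_conv P x -> in_conv Q x.
Proof.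
by move=> sPQ [k [v [w [Pv w_ge0 w_sum ->]]]]; exists k, v, w; split=> // t; apply: sPQ.
Qed.

Lemma in_conv_dotv_le {P c b x} :
  (forall y, P y -> dotv c y <= b) -> in_conv P x -> dotv c x <= b.
Proof.
move=> Pc [k [v [w [Pv w_ge0 w_sum ->]]]].
rewrite dotv_sum -[b]mul1r -w_sum mulr_suml.
by apply: ler_sum => t _; apply: ler_wpM2l; [exact: w_ge0 | exact: Pc].
Qed.

Lemma in_conv_dotv_eq {P c b x} :
  (forall y, P y -> dotv c y = b) -> in_conv P x -> dotv c x = b.
Proof.
move=> Pc [k [v [w [Pv w_ge0 w_sum ->]]]].
rewrite dotv_sum -[b]mul1r -w_sum mulr_suml.
by apply: eq_bigr => t _; rewrite Pc.
Qed.

Lemma in_conv_face {P c b x} : (forall y, P y -> dotv c y <= b) ->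
  in_conv P x -> dotv c x = b -> in_conv (fun y => P y /\ dotv c y = b) x.
Proof.
move=> Pc [k [v [w [Pv w_ge0 w_sum ->]]]] cx.
have slack_sum : \sum_(t < k) w t * (b - dotv c (v t)) = 0.
  under eq_bigr do rewrite mulrBr.
  by rewrite sumrB -mulr_suml w_sum mul1r -dotv_sum cx subrr.
have on_face t : w t != 0 -> dotv c (v t) = b.
  move=> wt; apply/eqP; rewrite eq_sym -subr_eq0; apply/eqP/(mulfI wt); rewrite mulr0.
  apply: (psumr_eq0P _ slack_sum) => // u _.
  by rewrite mulr_ge0 ?subr_ge0 ?Pc.
(* Weightless terms are replaced by a generator on the face; one exists since
   the weights sum to 1. *)
have [t0 wt0] : exists t0, w t0 != 0.
  case: (pickP (fun t => w t != 0)) => [t0 wt0|w0]; first by exists t0.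
  move: w_sum; rewrite big1 => [/esym/eqP|t _]; first by rewrite oner_eq0.
  exact/eqP/negbFE/w0.
exists k, (fun t => if w t == 0 then v t0 else v t), w; split => //.
  by move=> t; case: eqP => [_|/eqP wt]; split; rewrite ?on_face.
by apply: eq_bigr => t _; case: eqP => [->|]; rewrite ?scale0r.
Qed.

Lemma is_face_conv P Q c b : (forall y, P y -> dotv c y <= b) ->
  (forall y, Q y <-> P y /\ dotv c y = b) -> is_face (in_conv P) (in_conv Q).
Proof.
move=> Pc QP; exists c, b; split=> [x|x]; first exact: in_conv_dotv_le.
split=> [Qx|[Px cx]].
  split; first by apply: in_conv_sub _ Qx => y /QP [].
  by apply: in_conv_dotv_eq Qx => y /QP [].
by apply: in_conv_sub _ (in_conv_face Pc Px cx) => y /QP.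
Qed.

End ConvexHull.

Section Qtilde.
Context {R : realFieldType} {n : nat}.
Implicit Types (H : {set 'I_n * 'I_n}) (c : 'rV[R]_n).

Definition Qtilde_gen H (y : 'rV[R]_n) : Prop :=
  y = 0 \/ exists i j : 'I_n, (i, j) \in H /\ y = evec R i - evec R j.

Definition nondecreasing_row c : Prop :=
  forall i j : 'I_n, (i <= j)%N -> c 0 i <= c 0 j.

Definition level_graph c H : Prop :=
  forall i j : 'I_n, (i, j) \in H <-> (i < j)%N /\ c 0 i = c 0 j.

Lemma Qtilde0 H : @Qtilde R n H 0.
Proof. by apply: in_conv_pt; left. Qed.

Lemma Qtilde_edge {H} {i j : 'I_n} : (i, j) \in H -> @Qtilde R n H (evec R i - evec R j).
Proof. by move=> ijH; apply: in_conv_pt; right; exists i, j. Qed.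

Lemma Qtilde_edgeP H (i j : 'I_n) :
  i != j -> @Qtilde R n H (evec R i - evec R j) -> (i, j) \in H.
Proof.
move=> neq_ij Q_ij; apply/negPn/negP => ijNH.
pose c := evec R i - evec R j.
have cE (a : 'I_n) : c 0 a = (a == i)%:R - (a == j)%:R by rewrite !mxE eqxx.
have gen_le1 y : Qtilde_gen H y -> dotv c y <= 1.
  case=> [->|[a [b [abH ->]]]]; first by rewrite dotv0 ler01.
  rewrite dotv_evecB !cE; have := ler0n R (a == j); have := ler0n R (b == i).
  case: (a =P i) => [ai|_]; case: (b =P j) => [bj|_] /=;
    [by move: ijNH; rewrite -ai -bj abH | lra..].
have := in_conv_dotv_le gen_le1 Q_ij.
by rewrite dotv_evecB !cE !eqxx [j == i]eq_sym (negbTE neq_ij) /=; lra.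
Qed.

Lemma face_Qtilde_level_graph H : H \subset Kn n ->
  is_face (@Qtilde R n (Kn n)) (@Qtilde R n H) ->
  exists c, nondecreasing_row c /\ level_graph c H.
Proof.
move=> /subsetP HsubK [c [b [c_le_b face]]].
have b0 : b = 0 by have [_ <-] := (face 0).1 (Qtilde0 H); rewrite dotv0.
subst b; have Kn_edge (i j : 'I_n) : (i < j)%N -> @Qtilde R n (Kn n) (evec R i - evec R j).
  by move=> lt_ij; apply: Qtilde_edge; rewrite inE.
exists c; split=> [i j|i j].
  rewrite leq_eqVlt => /predU1P [/val_inj -> //|lt_ij].
  by have := c_le_b _ (Kn_edge _ _ lt_ij); rewrite dotv_evecB subr_le0.
split=> [ijH|[lt_ij eq_cij]].
  have lt_ij : (i < j)%N by have := HsubK _ ijH; rewrite inE.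
  have [_] := (face _).1 (Qtilde_edge ijH); rewrite dotv_evecB => /eqP.
  by rewrite subr_eq0 => /eqP.
apply: Qtilde_edgeP; first by rewrite neq_ltn lt_ij.
by apply/face; rewrite dotv_evecB eq_cij subrr; split; first exact: Kn_edge.
Qed.

Lemma level_graph_face_Qtilde c H :
  nondecreasing_row c -> level_graph c H -> is_face (@Qtilde R n (Kn n)) (@Qtilde R n H).
Proof.
move=> c_mono c_level; apply: (is_face_conv _ _ c 0).
  move=> y [->|[i [j [ijK ->]]]]; first by rewrite dotv0.
  by rewrite dotv_evecB subr_le0 c_mono // ltnW //; rewrite inE in ijK.
move=> y; split=> [[->|[i [j [ijH ->]]]]|[[->|[i [j [ijK ->]]]]]].
- by rewrite dotv0; split=> //; left.
- have [lt_ij eq_cij] := (c_level i j).1 ijH.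
  by rewrite dotv_evecB eq_cij subrr; split=> //; right; exists i, j; rewrite inE.
- by left.
- rewrite dotv_evecB => /eqP; rewrite subr_eq0 => /eqP eq_cij; right; exists i, j.
  by rewrite c_level; rewrite inE in ijK.
Qed.

Lemma level_graph_blocksP H : (0 < n)%N ->
  (exists c, nondecreasing_row c /\ level_graph c H) <->
  exists s : seq nat,
    [/\ (2 <= size s)%N, sorted ltn s, head 0%N s = 0%N, last 0%N s = n &
        forall i j : 'I_n, (i, j) \in H <-> (i < j)%N /\ in_block s i j].
Proof.
move=> n_gt0; split=> [[c [c_mono c_level]]|[s [size_s s_sorted s_head s_last s_blocks]]].
  pose f m := c 0 (insubd (Ordinal n_gt0) m).
  have fE (i : 'I_n) : f i = c 0 i by rewrite /f valKd.
  have f_mono a b : (a <= b)%N -> (b < n)%N -> f a <= f b.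
    move=> le_ab lt_bn; have lt_an := leq_ltn_trans le_ab lt_bn.
    by rewrite -[a]/(val (Ordinal lt_an)) -[b]/(val (Ordinal lt_bn)) !fE c_mono.
  have [s [size_s s_sorted s_head s_last s_level]] := exists_cut_seq n_gt0 f_mono.
  exists s; split=> // i j; apply: iff_trans (c_level i j) _.
  have level_block : (i < j)%N -> c 0 i = c 0 j <-> in_block s i j.
    move=> lt_ij; rewrite -!fE; apply: iff_trans (s_level _ _ (ltnW lt_ij) (ltn_ord j)) _.
    exact: iff_sym (in_blockP _ s_sorted s_head s_last (ltn_ord i)).
  by split=> [] [lt_ij /(level_block lt_ij)].
pose c : 'rV[R]_n := \row_i (ncuts s i)%:R.
exists c; split=> [i j le_ij|i j]; first by rewrite !mxE ler_nat leq_ncuts.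
apply: iff_trans (s_blocks i j) _.
have block_level : (i < j)%N -> in_block s i j <-> c 0 i = c 0 j.
  move=> lt_ij; apply: iff_trans (in_blockP _ s_sorted s_head s_last (ltn_ord i)) _.
  rewrite !mxE -(eq_ncuts s (ltnW lt_ij)); split=> [/eqP -> //|/eqP].
  by rewrite eqr_nat.
by split=> [] [lt_ij /(block_level lt_ij)].
Qed.

End Qtilde.

Theorem mainTheorem17 (R : realFieldType) (n : nat) (Hn : (1 <= n)%N)
  (H : {set 'I_n * 'I_n}) (HsubK : H \subset Kn n) :
  is_face (@Qtilde R n (Kn n)) (@Qtilde R n H) <->
  exists s : seq nat,
    [/\ (2 <= size s)%N, sorted ltn s, head 0%N s = 0%N, last 0%N s = n &
        forall i j : 'I_n, (i, j) \in H <->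
          ((i < j)%N /\ exists k : nat,
              [/\ (k.+1 < size s)%N, (nth 0%N s k <= i)%N & (j < nth 0%N s k.+1)%N])].
Proof.
apply: iff_trans _ (level_graph_blocksP H Hn).
split; first exact: face_Qtilde_level_graph.
by case=> c [c_mono c_level]; apply: level_graph_face_Qtilde c_mono c_level.
Qed.
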